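(* Let $G=\bigl((f_j)_{j=1}^n;(\mu^{R})_{\emptyset\ne R\subseteq[n]}\bigr)$ be an $n$-resource selection game with $f_1,\ldots,f_n$ continuous. (a) There exists a consumption profile $s$ in the $|P_G|$-resource selection game $\bigl((f_j)_{j\in P_G};(\mu^R)_{\emptyset\ne R\subseteq P_G}\bigr)$ such that $h^s_j=h_G$ for every $j\in P_G$. (b) If $P_G\ne[n]$, then $h_G>h_{G-P_G}$.
   Context: An $n$-resource selection game is $G=\bigl((f_j)_{j=1}^n;(\mu^{R})_{\emptyset\ne R\subseteq[n]}\bigr)$ with each $f_j:[0,\infty)\to\mathbb{R}$ nondecreasing and each $\mu^R\ge0$ (a game on a resource set $S$ is defined analogously with $S$ in place of $[n]$). A consumption profile assigns to each nonempty $R$ a vector $s(R)\ge0$ supported on $R$ with total $\mu^R$; loads $\mu^s_j=\sum_R s_j(R)$, costs $h^s_j=f_j(\mu^s_j)$. Equalization: for nondecreasing $g_1,\ldots,g_m:[0,\infty)\to\mathbb{R}\cup\{\mathrm{undefined}\}$, $\mathrm{eq}(g_1,\ldots,g_m)(\mu)=g_1(\mu_1)$ if there exist $\mu_1,\ldots,\mu_m\ge0$ summing to $\mu$ with $g_1(\mu_1)=\cdots=g_m(\mu_m)\in\mathbb{R}$, else $\mathrm{undefined}$. For nonempty $S\subseteq[n]$: $E_G(S)=\mathrm{eq}(f_k:k\in S)\bigl(\sum_{\emptyset\ne R\subseteq S}\mu^R\bigr)$; $M_G(S)$ is the set of nonempty $S'\subseteq S$ such that for every $0\le\mu\le\sum_{R\subseteq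 S,\,R\cap S'\ne\emptyset}\mu^R$, $\mathrm{eq}(f_k:k\in S')(\mu)\ne E_G(S)$ ($\mathrm{undefined}$ differs from every real); $D_G=\{S: E_G(S)\in\mathbb{R},\ M_G(S)=\emptyset\}$; $h_G=\max_{S\in D_G}E_G(S)$; $P_G=\bigcup\{S\in D_G:E_G(S)=h_G\}$. Resource removal: for $S\subsetneq[n]$, $G-S$ is the game with resources $[n]\setminus S$, cost functions $(f_j)_{j\notin S}$, and mass $\sum_{R:\,R\setminus S=R'}\mu^R$ for each nonempty $R'\subseteq[n]\setminus S$. *)

From HB Require Import structures.
From mathcomp Require Import all_boot.
From Stdlib Require Import Reals.

Set Implicit Arguments.
Unset Strict Implicit.
Unset Printing Implicit Defensive.

Local Open Scope R_scope.

Lemma Rplus_assoc' : associative Rplus.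
Proof. by move=> x y z; rewrite Rplus_assoc. Qed.
HB.instance Definition _ :=
  Monoid.isComLaw.Build R R0 Rplus Rplus_assoc' Rplus_comm Rplus_0_l.

Definition rsum (T : finType) (P : {pred T}) (F : T -> R) : R :=
  \big[Rplus/R0]_(i in P) F i.

(* A game on a resource
   set U ⊆ [n] uses only f_j for j in U and mu^Rs for nonempty Rs ⊆ U. *)

Definition nondecr0 (g : R -> R) : Prop :=
  forall x y, 0 <= x -> x <= y -> g x <= g y.

Definition cont0 (g : R -> R) : Prop :=
  forall x, 0 <= x -> forall eps, 0 < eps -> exists delta, 0 < delta /\
    forall y, 0 <= y -> Rabs (y - x) < delta -> Rabs (g y - g x) < eps.

Section Game.
Variable n : nat.
Variable f : 'I_n -> R -> R.
Variable mu : {set 'I_n} -> R.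

(* eq(f_k : k in S)(m) = c, for nonempty S: there are x_k >= 0 (k in S)
   summing to m with f_k(x_k) = c for all k in S.  (For nondecreasing f_k the
   common value c is unique, so this relation is the graph of eq.) *)
Definition eqz (S : {set 'I_n}) (m c : R) : Prop :=
  S != set0 /\
  exists x : 'I_n -> R,
    (forall k, k \in S -> 0 <= x k) /\
    rsum (mem S) x = m /\
    (forall k, k \in S -> f k (x k) = c).

Definition massIn (S : {set 'I_n}) : R :=
  rsum (fun Rs : {set 'I_n} => (Rs != set0) && (Rs \subset S)) mu.

Definition massMeet (S S' : {set 'I_n}) : R :=
  rsum (fun Rs : {set 'I_n} => (Rs \subset S) && (Rs :&: S' != set0)) mu.

Definition Eval (S : {set 'I_n}) (c : R) : Prop := eqz S (massIn S) c.

Definition inM (S S' : {set 'I_n}) (c : R) : Prop :=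
  S' != set0 /\ S' \subset S /\
  forall m, 0 <= m -> m <= massMeet S S' -> ~ eqz S' m c.

Definition inD (U S : {set 'I_n}) (c : R) : Prop :=
  S != set0 /\ S \subset U /\ Eval S c /\ (forall S', ~ inM S S' c).

Definition isH (U : {set 'I_n}) (h : R) : Prop :=
  (exists S, inD U S h) /\ (forall S c, inD U S c -> c <= h).

Definition isP (U : {set 'I_n}) (h : R) (P : {set 'I_n}) : Prop :=
  forall j, j \in P <-> exists S, inD U S h /\ j \in S.

Definition consProfile (U : {set 'I_n}) (s : {set 'I_n} -> 'I_n -> R) : Prop :=
  forall Rs, Rs != set0 -> Rs \subset U ->
    (forall j, 0 <= s Rs j) /\ (forall j, j \notin Rs -> s Rs j = 0) /\
    rsum (mem Rs) (s Rs) = mu Rs.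

Definition load (U : {set 'I_n}) (s : {set 'I_n} -> 'I_n -> R) (j : 'I_n) : R :=
  rsum (fun Rs : {set 'I_n} => (Rs != set0) && (Rs \subset U)) (fun Rs => s Rs j).

End Game.

(* masses of the game G - S : mu'(R') = sum of mu^Rs over nonempty Rs with Rs \ S = R' *)
Definition removeMass (n : nat) (mu : {set 'I_n} -> R) (S : {set 'I_n})
  : {set 'I_n} -> R :=
  fun R' => rsum (fun Rs : {set 'I_n} => (Rs != set0) && (Rs :\: S == R')) mu.

From HB Require Import structures.
From mathcomp Require Import all_boot.
From Stdlib Require Import Reals Lra Classical.
Local Open Scope R_scope.

(* (a) For k in P_G the loads at which f_k equals h_G form an interval [lo_k, hi_k]. A
   consumption profile on P_G with every load in its interval is a flow with lower and upper
   bounds from resource sets to resources, which by a Hoffman-type argument exists iff each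
   resource set T receives at least sum_T lo from the masses meeting T and at most sum_T hi
   from the masses inside T. The first condition is the Hall-type condition M_G(S) = empty
   of the sets S of D_G at level h_G; it is stable under unions, so it holds on P_G. The
   second holds because otherwise the masses inside T would equalize strictly above h_G,
   whereas every equalization value E_G(T) is at most h_G.
   (b) If some S' in D_{G-P_G} had E >= h_G, lowering it to level h_G and gluing it to the
   Hall condition of P_G would put P_G u S' in D_G at level h_G, contradicting the
   definition of P_G. *)

Section RealSums.
Context {T : finType}.
Implicit Types (P Q : {pred T}) (F G : T -> R).

Lemma rsum_le P F G : (forall i, P i -> F i <= G i) -> rsum P F <= rsum P G.
Proof. by move=> FG; apply: (big_ind2 Rle) => //; [lra | move=> *; lra]. Qed.

Lemma rsum_ge0 P F : (forall i, P i -> 0 <= F i) -> 0 <= rsum P F.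
Proof. by move=> F0; apply: (big_ind (Rle 0)) => //; [lra | move=> *; lra]. Qed.

Lemma eq_rsum P Q F G : (forall i, P i = Q i) -> (forall i, Q i -> F i = G i) ->
  rsum P F = rsum Q G.
Proof. by move=> PQ FG; rewrite /rsum (eq_bigl Q) //; apply: eq_bigr. Qed.

Lemma rsum_mkcond P F : rsum P F = rsum predT (fun i => if P i then F i else 0).
Proof. exact: big_mkcond. Qed.

Lemma rsumD P F G : rsum P (fun i => F i + G i) = rsum P F + rsum P G.
Proof. exact: big_split. Qed.

Lemma rsumZ P c F : rsum P (fun i => c * F i) = c * rsum P F.
Proof.
apply: (big_rec2 (fun x y => x = c * y)); first ring.
by move=> i x y _ ->; ring.
Qed.

Lemma rsumB P F G : rsum P (fun i => F i - G i) = rsum P F - rsum P G.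
Proof.
have -> : rsum P (fun i => F i - G i) = rsum P F + rsum P (fun i => -1 * G i).
  by rewrite -rsumD; apply: eq_rsum => // i _; ring.
by rewrite rsumZ; ring.
Qed.

Lemma rsumID Q P F :
  rsum P F = rsum (fun i => P i && Q i) F + rsum (fun i => P i && ~~ Q i) F.
Proof. exact: bigID. Qed.

Lemma rsumD1 i0 P F : P i0 -> rsum P F = F i0 + rsum (fun i => P i && (i != i0)) F.
Proof. exact: bigD1. Qed.

Lemma rsum_pred0 P F : (forall i, ~~ P i) -> rsum P F = 0.
Proof. by move=> P0; rewrite /rsum big_pred0; [reflexivity | move=> i; exact: negbTE (P0 i)]. Qed.

Lemma rsum_eq0 P F : (forall i, P i -> F i = 0) -> rsum P F = 0.
Proof. by move=> F0; rewrite /rsum big1. Qed.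

Lemma rsum_pred1 i0 F : rsum (fun i => i == i0) F = F i0.
Proof. exact: big_pred1_eq. Qed.

Lemma rsum_term_le {i0 P F} : P i0 -> (forall i, P i -> 0 <= F i) -> F i0 <= rsum P F.
Proof.
move=> Pi0 F0; rewrite (rsumD1 i0) //.
suff : 0 <= rsum (fun i => P i && (i != i0)) F by lra.
by apply: rsum_ge0 => i /andP [/F0].
Qed.

Lemma rsum_subpred P Q F : (forall i, P i -> Q i) -> (forall i, Q i -> 0 <= F i) ->
  rsum P F <= rsum Q F.
Proof.
move=> PQ F0; rewrite (rsumID P Q F).
have -> : rsum (fun i => Q i && P i) F = rsum P F.
  by apply: eq_rsum => // i; case: (boolP (P i)) => Pi; rewrite ?andbT ?andbF ?PQ.
suff : 0 <= rsum (fun i => Q i && ~~ P i) F by lra.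
by apply: rsum_ge0 => i /andP [/F0].
Qed.

Lemma rsum_lt {i0 P F G} : P i0 -> (forall i, P i -> F i <= G i) -> F i0 < G i0 ->
  rsum P F < rsum P G.
Proof.
move=> Pi0 FG lt0; rewrite (rsumD1 i0 P F Pi0) (rsumD1 i0 P G Pi0).
suff : rsum (fun i => P i && (i != i0)) F <= rsum (fun i => P i && (i != i0)) G by lra.
by apply: rsum_le => i /andP [/FG].
Qed.

Lemma rsum_set0 F : rsum (mem (set0 : {set T})) F = 0.
Proof. exact: rsum_pred0 (fun j => negbT (in_set0 j)). Qed.

Lemma rsum_set1 F k : rsum (mem [set k]) F = F k.
Proof. by rewrite -(rsum_pred1 k); apply: eq_rsum => // j; exact: in_set1. Qed.

Lemma rsum_setID (A B : {set T}) F :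
  rsum (mem A) F = rsum (mem (A :&: B)) F + rsum (mem (A :\: B)) F.
Proof.
rewrite (rsumID (mem B)); congr (_ + _); apply: eq_rsum => // i.
  by rewrite [RHS]inE.
by rewrite [RHS]inE andbC.
Qed.

Lemma rsum_partition (g : T -> T) (q pp : pred T) F :
  rsum pp (fun t => rsum (fun i => q i && (g i == t)) F) = rsum (fun i => q i && pp (g i)) F.
Proof.
rewrite /rsum [RHS](partition_big g pp) => [|i /andP []//].
apply: eq_bigr => t pt; apply: eq_bigl => i; rewrite !unfold_in /=.
by case: eqP => [->|]; rewrite ?andbF ?andbT // (pt : pp t) andbT.
Qed.

Lemma rsum_le_add F G i0 d :
  (forall i, G i <= F i) -> G i0 + d <= F i0 -> rsum predT G + d <= rsum predT F.
Proof.
move=> GF gap0; rewrite (rsumD1 i0 predT G) // (rsumD1 i0 predT F) //.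
suff : rsum (fun i => predT i && (i != i0)) G <= rsum (fun i => predT i && (i != i0)) F by lra.
by apply: rsum_le.
Qed.

End RealSums.

Lemma seq_argmax (T : eqType) (t : T -> R) (s : seq T) : s != [::] ->
  exists2 j, j \in s & forall i, i \in s -> t i <= t j.
Proof.
elim: s => [//|y [|z s] IH] _.
  by exists y => [|i]; rewrite ?mem_seq1 // => /eqP ->; lra.
have [j js jmax] := IH isT.
case: (Rle_lt_dec (t y) (t j)) => [yj | jy].
  by exists j => [|i]; rewrite in_cons ?js ?orbT // => /orP [/eqP -> // | /jmax].
exists y => [|i]; rewrite in_cons ?eqxx // => /orP [/eqP -> | /jmax]; lra.
Qed.

Lemma fin_argmax (T : finType) (P : pred T) (t : T -> R) i0 : P i0 ->
  exists j, P j /\ forall i, P i -> t i <= t j.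
Proof.
move=> Pi0; have : [seq i <- enum T | P i] != [::].
  by apply/eqP => /(congr1 (fun s => i0 \in s)); rewrite mem_filter Pi0 mem_enum.
case/(@seq_argmax _ t) => j; rewrite mem_filter => /andP [Pj _] jmax.
by exists j; split => // i Pi; apply: jmax; rewrite mem_filter Pi mem_enum.
Qed.

Lemma fin_ub (T : finType) (P : pred T) (t : T -> R) b :
  (forall i, P i -> t i < b) -> exists M, M < b /\ forall i, P i -> t i <= M.
Proof.
move=> tb; case: (pickP P) => [i0 Pi0|P0].
  have [j [Pj jmax]] := @fin_argmax _ P t i0 Pi0.
  by exists (t j); split; [apply: tb | ].
by exists (b - 1); split => [|i]; [lra | rewrite P0].
Qed.

Lemma fin_lb (T : finType) (P : pred T) (t : T -> R) b :
  (forall i, P i -> b < t i) -> exists M, b < M /\ forall i, P i -> M <= t i.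
Proof.
move=> tb; have [M [Mb Mmax]] := @fin_ub T P (fun i => - t i) (- b) (fun i Pi => Ropp_lt_contravar _ _ (tb i Pi)).
by exists (- M); split => [|i /Mmax]; lra.
Qed.

Lemma meetsP {T : finType} {A B : {set T}} :
  reflect (exists2 x, x \in A & x \in B) (A :&: B != set0).
Proof.
apply: (iffP (set0Pn _)) => [[x]|[x xA xB]]; last by exists x; rewrite inE xA xB.
by rewrite inE => /andP [xA xB]; exists x.
Qed.

Lemma meet_ne0 {T : finType} {A B : {set T}} : A :&: B != set0 -> A != set0.
Proof. by apply: contraNN => /eqP ->; rewrite set0I. Qed.

Lemma rsum_update (T I : finType) (N : I -> T) (a : I -> R) (p : pred T) i0 B b :
  rsum (fun i => p (if i == i0 then B else N i)) (fun i => if i == i0 then b else a i)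
  = rsum (fun i => p (N i)) a - (if p (N i0) then a i0 else 0) + (if p B then b else 0).
Proof.
rewrite !(rsum_mkcond (fun i => p _)) (rsumD1 i0 predT) // [in RHS](rsumD1 i0 predT) //= !eqxx.
have -> : rsum (fun i => i != i0)
    (fun i => if p (if i == i0 then B else N i) then if i == i0 then b else a i else 0)
  = rsum (fun i => i != i0) (fun i => if p (N i) then a i else 0).
  by apply: eq_rsum => // i /negbTE ->.
ring.
Qed.

(** * Flows with lower and upper bounds *)

Section BoundedFlow.
Context {J I : finType}.
Notation S := {set J}.
Implicit Types (N : I -> S) (a : I -> R) (l u : J -> R) (T X Y : S).

Definition sum_over l T := rsum (mem T) l.

Definition mass_meeting N a T := rsum (fun i => N i :&: T != set0) a.
Definition mass_inside N a T := rsum (fun i => N i \subset T) a.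

Definition bounded_flow N a l u :=
  exists x : I -> J -> R,
    (forall i j, 0 <= x i j) /\ (forall i j, j \notin N i -> x i j = 0) /\
    (forall i, rsum predT (x i) = a i) /\
    (forall j, l j <= rsum predT (fun i => x i j) <= u j).

Lemma sum_overE l T : sum_over l T = rsum predT (fun j => if j \in T then l j else 0).
Proof. exact: rsum_mkcond. Qed.

Lemma sum_over_set1 l k : sum_over l [set k] = l k.
Proof. exact: rsum_set1. Qed.

Lemma sum_overUI l T1 T2 :
  sum_over l T1 + sum_over l T2 = sum_over l (T1 :|: T2) + sum_over l (T1 :&: T2).
Proof.
rewrite !sum_overE -!rsumD; apply: eq_rsum => // j _; rewrite !inE.
by case: (j \in T1); case: (j \in T2) => /=; ring.
Qed.

Lemma sum_over_shift l k d T :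
  sum_over (fun j => l j + (if j == k then d else 0)) T
  = sum_over l T + (if k \in T then d else 0).
Proof.
rewrite /sum_over rsumD; congr (_ + _).
rewrite rsum_mkcond (rsumD1 k) // rsum_eq0; last first.
  by move=> i /andP [_ /negbTE ->]; case: ifP.
by rewrite eqxx; case: ifP => _; ring.
Qed.

Lemma sum_over_cross l u X Y : (forall k, l k <= u k) ->
  sum_over u (Y :\: X) - sum_over l (X :\: Y) <= sum_over u Y - sum_over l X.
Proof.
move=> lu; rewrite !sum_overE.
suff : rsum predT (fun j => (if j \in Y :\: X then u j else 0) + (if j \in X then l j else 0))
  <= rsum predT (fun j => (if j \in Y then u j else 0) + (if j \in X :\: Y then l j else 0)).
  by rewrite !rsumD; lra.
apply: rsum_le => j _; rewrite !inE; have := lu j.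
by case: (j \in X); case: (j \in Y) => /=; lra.
Qed.

Section Modularity.
Variables (N : I -> S) (a : I -> R).
Hypothesis a_ge0 : forall i, 0 <= a i.

Lemma mass_meeting_submod i0 T1 T2 :
  N i0 :&: T1 != set0 -> N i0 :&: T2 != set0 -> N i0 :&: (T1 :&: T2) == set0 ->
  mass_meeting N a (T1 :|: T2) + mass_meeting N a (T1 :&: T2) + a i0
  <= mass_meeting N a T1 + mass_meeting N a T2.
Proof.
move=> m1 m2 m12; rewrite /mass_meeting !(rsum_mkcond _ a) -!rsumD.
apply: (rsum_le_add _ _ i0) => [i|]; last first.
  by rewrite m1 m2 m12 setIUr setU_eq0 (negbTE m1) /=; lra.
have EU : (N i :&: (T1 :|: T2) != set0) = (N i :&: T1 != set0) || (N i :&: T2 != set0).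
  by rewrite setIUr setU_eq0 negb_and.
have EI : N i :&: (T1 :&: T2) != set0 -> (N i :&: T1 != set0) && (N i :&: T2 != set0).
  case/meetsP => x xN; rewrite inE => /andP [x1 x2].
  by apply/andP; split; apply/meetsP; exists x.
rewrite EU; move: EI; have := a_ge0 i.
by case: (N i :&: T1 != set0); case: (N i :&: T2 != set0);
  case: (N i :&: (T1 :&: T2) != set0) => /= ai EI; try lra; have := EI isT.
Qed.

Lemma mass_inside_supermod i0 T1 T2 :
  ~~ (N i0 \subset T1) -> ~~ (N i0 \subset T2) -> N i0 \subset T1 :|: T2 ->
  mass_inside N a T1 + mass_inside N a T2 + a i0
  <= mass_inside N a (T1 :|: T2) + mass_inside N a (T1 :&: T2).
Proof.
move=> s1 s2 s12; rewrite /mass_inside !(rsum_mkcond _ a) -!rsumD.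
apply: (rsum_le_add _ _ i0) => [i|]; last first.
  by rewrite (negbTE s1) (negbTE s2) s12 subsetI (negbTE s1) /=; lra.
have U1 : N i \subset T1 -> N i \subset T1 :|: T2 by move/subset_trans; apply; apply: subsetUl.
have U2 : N i \subset T2 -> N i \subset T1 :|: T2 by move/subset_trans; apply; apply: subsetUr.
rewrite subsetI; move: U1 U2; have := a_ge0 i.
by case: (N i \subset T1); case: (N i \subset T2); case: (N i \subset T1 :|: T2)
  => /= ai U1 U2; try lra; by [move: (U1 isT) | move: (U2 isT)].
Qed.

Lemma mass_cross i0 X Y :
  N i0 :&: X != set0 -> ~~ (N i0 \subset Y) -> N i0 :&: X \subset Y ->
  mass_meeting N a (X :\: Y) - mass_inside N a (Y :\: X) + a i0
  <= mass_meeting N a X - mass_inside N a Y.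
Proof.
move=> mX sY sXY.
have E1 (A : S) : A \subset Y -> (A :&: (X :\: Y) != set0) = false.
  move=> AY; apply/negbTE/meetsP => [[x xA]]; rewrite inE => /andP [/negP xY _].
  by apply: xY; apply: (subsetP AY).
have E2 (A : S) : (A \subset Y :\: X) = (A \subset Y) && (A :&: X == set0).
  by rewrite subsetD setI_eq0.
have E3 (A : S) : A :&: (X :\: Y) != set0 -> A :&: X != set0.
  by case/meetsP => x xA; rewrite inE => /andP [_ xX]; apply/meetsP; exists x.
rewrite /mass_meeting /mass_inside !(rsum_mkcond _ a).
set F1 := (fun i => _); set G1 := (fun i => _); set F2 := (fun i => _); set G2 := (fun i => _).
suff : rsum predT (fun i => F1 i + G2 i) + a i0 <= rsum predT (fun i => F2 i + G1 i).
  by rewrite !rsumD; lra.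
apply: (rsum_le_add _ _ i0) => [i|]; rewrite /F1 /G1 /F2 /G2 E2.
  have := a_ge0 i; have := E3 (N i).
  case NY : (N i \subset Y); first by rewrite (E1 _ NY) /=; case: (N i :&: X == set0) => /=; lra.
  by case: (N i :&: (X :\: Y) != set0); case: (N i :&: X == set0) => /= E ai; try lra; have := E isT.
have -> : (N i0 :&: (X :\: Y) != set0) = false.
  apply/negbTE/meetsP => [[x xN]]; rewrite inE => /andP [xY xX].
  have : x \in N i0 :&: X by rewrite inE xN xX.
  by move/(subsetP sXY); rewrite (negbTE xY).
by rewrite mX (negbTE sY) /=; lra.
Qed.

End Modularity.

Section Split.
Variables (N : I -> S) (a : I -> R) (l u : J -> R) (i0 : I) (k : J).
Hypothesis a_ge0 : forall i, 0 <= a i.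
Hypothesis l_le_u : forall j, l j <= u j.
Hypothesis hall_l : forall T, sum_over l T <= mass_meeting N a T.
Hypothesis hall_u : forall T, mass_inside N a T <= sum_over u T.
Hypothesis k_in : k \in N i0.
Let B := N i0 :\ k.
Hypothesis B_ne0 : B != set0.
Let lslack T := mass_meeting N a T - sum_over l T.
Let uslack T := sum_over u T - mass_inside N a T.

Let B_sub : B \subset N i0.
Proof. exact: subD1set. Qed.

Let meet_splitE T : (N i0 :&: T != set0) = (k \in T) || (B :&: T != set0).
Proof.
apply/meetsP/orP => [[x xA xT]|[kT|/meetsP [x xB xT]]]; last 2 first.
- by exists k.
- by exists x => //; apply: (subsetP B_sub).
case: (eqVneq x k) => [<-|xk]; first by left.
by right; apply/meetsP; exists x; rewrite // !inE xk.
Qed.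

Let sub_splitE T : (N i0 \subset T) = (k \in T) && (B \subset T).
Proof.
apply/idP/andP => [AT|[kT BT]]; first by split; [apply: (subsetP AT) | apply: subset_trans AT].
apply/subsetP => x xA; case: (eqVneq x k) => [->//|xk].
by apply: (subsetP BT); rewrite !inE xk.
Qed.

Let in_B x : x \in N i0 -> x != k -> x \in B.
Proof. by move=> xA xk; rewrite !inE xk. Qed.

(* Item i0 is split into a part al supported on B and a part a i0 - al sent entirely to k.
   The split instance keeps both Hall conditions iff al lies between the bounds collected in
   split_amount; the four inequalities below (sub/supermodularity) make these bounds compatible. *)
Lemma slack_ll {T1 T2} : k \notin T1 -> N i0 :&: T1 != set0 -> k \in T2 -> B :&: T2 == set0 ->
  a i0 <= lslack T1 + lslack T2.
Proof.
move=> k1 m1 k2 m2.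
have := sum_overUI l T1 T2; have := hall_l (T1 :|: T2); have := hall_l (T1 :&: T2).
suff : mass_meeting N a (T1 :|: T2) + mass_meeting N a (T1 :&: T2) + a i0
    <= mass_meeting N a T1 + mass_meeting N a T2 by rewrite /lslack; lra.
apply: mass_meeting_submod => //; first by apply/meetsP; exists k.
apply/negPn/negP => /meetsP [x xA]; rewrite inE => /andP [x1 x2].
have xk : x != k by apply: contraNneq k1 => <-.
have : x \in B :&: T2 by rewrite inE x2 andbT; apply: in_B.
by rewrite (eqP m2) inE.
Qed.

Lemma slack_lu {T1 T2} : k \notin T1 -> N i0 :&: T1 != set0 -> k \notin T2 -> B \subset T2 ->
  a i0 <= lslack T1 + uslack T2.
Proof.
move=> k1 m1 k2 s2.
have := sum_over_cross l u T1 T2 l_le_u; have := hall_l (T1 :\: T2); have := hall_u (T2 :\: T1).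
suff : mass_meeting N a (T1 :\: T2) - mass_inside N a (T2 :\: T1) + a i0
    <= mass_meeting N a T1 - mass_inside N a T2 by rewrite /lslack /uslack; lra.
apply: mass_cross => //; first by apply/negP => /subsetP /(_ k k_in); apply/negP.
apply/subsetP => x; rewrite inE => /andP [xA x1].
by apply: (subsetP s2); apply: in_B => //; apply: contraNneq k1 => <-.
Qed.

Lemma slack_ul {T1 T2} : k \in T1 -> ~~ (B \subset T1) -> k \in T2 -> B :&: T2 == set0 ->
  a i0 <= uslack T1 + lslack T2.
Proof.
move=> k1 s1 k2 m2.
have := sum_over_cross l u T2 T1 l_le_u; have := hall_l (T2 :\: T1); have := hall_u (T1 :\: T2).
suff : mass_meeting N a (T2 :\: T1) - mass_inside N a (T1 :\: T2) + a i0
    <= mass_meeting N a T2 - mass_inside N a T1 by rewrite /lslack /uslack; lra.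
apply: mass_cross => //; first by apply/meetsP; exists k.
  by rewrite sub_splitE (negbTE s1) andbF.
apply/subsetP => x; rewrite inE => /andP [xA x2].
case: (eqVneq x k) => [-> //|xk].
have : x \in B :&: T2 by rewrite inE x2 andbT; apply: in_B.
by rewrite (eqP m2) inE.
Qed.

Lemma slack_uu {T1 T2} : k \in T1 -> ~~ (B \subset T1) -> k \notin T2 -> B \subset T2 ->
  a i0 <= uslack T1 + uslack T2.
Proof.
move=> k1 s1 k2 s2.
have := sum_overUI u T1 T2; have := hall_u (T1 :|: T2); have := hall_u (T1 :&: T2).
suff : mass_inside N a T1 + mass_inside N a T2 + a i0
    <= mass_inside N a (T1 :|: T2) + mass_inside N a (T1 :&: T2) by rewrite /uslack; lra.
apply: mass_inside_supermod => //.
- by rewrite sub_splitE (negbTE s1) andbF.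
- by apply/negP => /subsetP /(_ k k_in); apply/negP.
apply/subsetP => x xA; rewrite inE.
case: (eqVneq x k) => [->|xk]; first by rewrite k1.
by rewrite (subsetP s2) ?orbT //; apply: in_B.
Qed.

Lemma split_amount : exists al, 0 <= al <= a i0 /\
  (forall T, k \notin T -> N i0 :&: T != set0 -> a i0 - lslack T <= al) /\
  (forall T, k \in T -> ~~ (B \subset T) -> a i0 - uslack T <= al) /\
  (forall T, k \in T -> B :&: T == set0 -> al <= lslack T) /\
  (forall T, k \notin T -> B \subset T -> al <= uslack T).
Proof.
pose lb T := Rmax (if (k \notin T) && (N i0 :&: T != set0) then a i0 - lslack T else 0)
                  (if (k \in T) && ~~ (B \subset T) then a i0 - uslack T else 0).
pose ub T := Rmin (if (k \in T) && (B :&: T == set0) then lslack T else a i0)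
                  (if (k \notin T) && (B \subset T) then uslack T else a i0).
have lslack_ge0 T : 0 <= lslack T by have := hall_l T; rewrite /lslack; lra.
have uslack_ge0 T : 0 <= uslack T by have := hall_u T; rewrite /uslack; lra.
have lb_ub T1 T2 : lb T1 <= ub T2.
  have := a_ge0 i0; have := lslack_ge0 T1; have := lslack_ge0 T2.
  have := uslack_ge0 T1; have := uslack_ge0 T2 => ? ? ? ? ?.
  apply: Rmax_lub; apply: Rmin_glb;
    case: ifP => [/andP [k1 c1]|_]; case: ifP => [/andP [k2 c2]|_]; try lra.
  - by have := slack_ll k1 c1 k2 c2; lra.
  - by have := slack_lu k1 c1 k2 c2; lra.
  - by have := slack_ul k1 c1 k2 c2; lra.
  - by have := slack_uu k1 c1 k2 c2; lra.
have [T0 [_ T0max]] := @fin_argmax _ predT lb set0 isT.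
exists (lb T0); split.
  have lb0 : lb set0 = 0 by rewrite /lb setI0 eqxx in_set0 /=; apply: Rmax_left; lra.
  have ub0 : ub set0 = a i0.
    by rewrite /ub in_set0 subset0 (negbTE B_ne0) /=; apply: Rmin_left; lra.
  by have := T0max set0 isT; have := lb_ub T0 set0; rewrite lb0 ub0; lra.
have lb_le T : lb T <= lb T0 by apply: T0max.
have le_ub T : lb T0 <= ub T by apply: lb_ub.
split; [|split; [|split]] => T C1 C2.
- by apply: Rle_trans (lb_le T); rewrite /lb C1 C2; apply: Rmax_l.
- by apply: Rle_trans (lb_le T); rewrite /lb C1 C2; apply: Rmax_r.
- by apply: Rle_trans (le_ub T) _; rewrite /ub C1 C2; apply: Rmin_l.
- by apply: Rle_trans (le_ub T) _; rewrite /ub C1 C2; apply: Rmin_r.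
Qed.

Let N' := fun i => if i == i0 then B else N i.
Let a' al := fun i => if i == i0 then al else a i.
Let shift (v : J -> R) d := fun j => v j + (if j == k then d else 0).

Lemma split_hall_lower al :
  (forall T, k \notin T -> N i0 :&: T != set0 -> a i0 - lslack T <= al) ->
  (forall T, k \in T -> B :&: T == set0 -> al <= lslack T) ->
  forall T, sum_over (shift l (al - a i0)) T <= mass_meeting N' (a' al) T.
Proof.
move=> lo hi T; rewrite sum_over_shift /mass_meeting.
rewrite (rsum_update _ _ N a (fun X => X :&: T != set0)) -/(mass_meeting N a T) meet_splitE.
have := hall_l T; case kT : (k \in T); case bT : (B :&: T != set0) => /= hl; try lra.
- by have := hi T kT (negbFE bT); rewrite /lslack; lra.
- by have := lo T (negbT kT); rewrite meet_splitE kT bT /lslack => /(_ isT); lra.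
Qed.

Lemma split_hall_upper al :
  (forall T, k \in T -> ~~ (B \subset T) -> a i0 - uslack T <= al) ->
  (forall T, k \notin T -> B \subset T -> al <= uslack T) ->
  forall T, mass_inside N' (a' al) T <= sum_over (shift u (al - a i0)) T.
Proof.
move=> lo hi T; rewrite sum_over_shift /mass_inside.
rewrite (rsum_update _ _ N a (fun X => X \subset T)) -/(mass_inside N a T) sub_splitE.
have := hall_u T; case kT : (k \in T); case bT : (B \subset T) => /= hu; try lra.
- by have := lo T kT (negbT bT); rewrite /uslack; lra.
- by have := hi T (negbT kT) bT; rewrite /uslack; lra.
Qed.

Lemma split_flow_lift al : al <= a i0 ->
  bounded_flow N' (a' al) (shift l (al - a i0)) (shift u (al - a i0)) ->
  bounded_flow N a l u.
Proof.
move=> al_le [x [x_ge0 [x_supp [x_sum x_load]]]].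
pose y i j := if i == i0 then x i0 j + (if j == k then a i0 - al else 0) else x i j.
have y_load j : rsum predT (fun i => y i j) = rsum predT (fun i => x i j) + (if j == k then a i0 - al else 0).
  rewrite (rsumD1 i0 predT) // [in RHS](rsumD1 i0 predT) //= /y eqxx.
  have -> : rsum (fun i => i != i0) (fun i => if i == i0 then x i0 j + (if j == k then a i0 - al else 0) else x i j)
    = rsum (fun i => i != i0) (fun i => x i j) by apply: eq_rsum => // i /negbTE ->.
  ring.
exists y; split; [|split; [|split]].
- move=> i j; rewrite /y; case: ifP => _; last exact: x_ge0.
  by have := x_ge0 i0 j; case: ifP => _; lra.
- move=> i j jN; rewrite /y; case: (eqVneq i i0) => [ii0|ii0].
    subst i; have jk : (j == k) = false by apply/negbTE; apply: contraNneq jN => ->.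
    rewrite jk x_supp ?/N' ?eqxx; first ring.
    by apply: contraNN jN; apply: (subsetP B_sub).
  by apply: x_supp; rewrite /N' (negbTE ii0).
- move=> i; rewrite /y; case: (eqVneq i i0) => [->|ii0]; last by rewrite x_sum /a' (negbTE ii0).
  rewrite rsumD x_sum /a' eqxx -(rsum_mkcond (fun j => j == k) (fun _ => a i0 - al)) rsum_pred1; ring.
- move=> j; rewrite y_load; have := x_load j; rewrite /shift; case: ifP => _; lra.
Qed.

End Split.

Lemma bounded_flow_singletons N a l u :
  (forall i, (#|N i| <= 1)%nat) -> (forall i, 0 <= a i) ->
  (forall T, sum_over l T <= mass_meeting N a T) -> (forall T, mass_inside N a T <= sum_over u T) ->
  bounded_flow N a l u.
Proof.
move=> N_small a_ge0 hall_l hall_u.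
have N_shape i : N i = set0 \/ exists j0, N i = [set j0].
  have := N_small i; rewrite leq_eqVlt ltnS leqn0 => /orP [/cards1P [j0 ->]|]; first by right; exists j0.
  by rewrite cards_eq0 => /eqP ->; left.
have a_empty i : N i = set0 -> a i = 0.
  move=> Ni; have := hall_u set0; rewrite /sum_over rsum_set0.
  have : a i <= mass_inside N a set0 by apply: rsum_term_le; rewrite ?Ni ?subxx.
  by have := a_ge0 i; lra.
exists (fun i j => if j \in N i then a i else 0); split; [|split; [|split]].
- by move=> i j; case: ifP => _; [apply: a_ge0 | lra].
- by move=> i j /negbTE ->.
- move=> i; case: (N_shape i) => [Ni|[j0 Ni]].
    by rewrite a_empty // rsum_eq0 // => j _; rewrite Ni inE.
  rewrite (rsumD1 j0 predT) // Ni inE eqxx rsum_eq0; first ring.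
  by move=> j /andP [_ jj0]; rewrite inE (negbTE jj0).
- move=> k; rewrite -rsum_mkcond; split.
    have := hall_l [set k]; rewrite sum_over_set1 /mass_meeting.
    by rewrite (@eq_rsum _ _ (fun i => k \in N i) a a) // => i; rewrite setI_eq0 disjoint_sym disjoints1 negbK.
  rewrite -sum_over_set1; apply: Rle_trans (hall_u [set k]).
  apply: rsum_subpred => [i kN|i _]; last exact: a_ge0.
  case: (N_shape i) => [Ni|[j0 Ni]]; first by move: kN; rewrite Ni inE.
  by move: kN; rewrite Ni !inE => /eqP ->; rewrite sub1set inE.
Qed.

(* Hoffman's circulation theorem specialized to bipartite flows, by induction on sum_i |N i|. *)
Theorem bounded_flow_exists N a l u :
  (forall i, 0 <= a i) -> (forall j, l j <= u j) ->
  (forall T, sum_over l T <= mass_meeting N a T) -> (forall T, mass_inside N a T <= sum_over u T) ->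
  bounded_flow N a l u.
Proof.
move: {2}(\sum_i #|N i|)%nat (leqnn (\sum_i #|N i|)) => m.
elim: m N a l u => [|m IH] N a l u size_N a_ge0 l_le_u hall_l hall_u.
  apply: bounded_flow_singletons => // i.
  apply: (@leq_trans (\sum_j #|N j|)); last exact: leq_trans size_N _.
  by rewrite (bigD1 i) //= leq_addr.
case: (boolP [forall i, #|N i| <= 1]%nat) => [/forallP|]; first by move=> ?; apply: bounded_flow_singletons.
rewrite negb_forall => /existsP [i0]; rewrite -ltnNge => big_i0.
have [k k_in] : exists k, k \in N i0 by apply/set0Pn; rewrite -card_gt0 ltnW.
have card_B : #|N i0| = #|N i0 :\ k|.+1 by rewrite (cardsD1 k) k_in.
have B_ne0 : N i0 :\ k != set0 by rewrite -card_gt0 -ltnS -card_B.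
have [al [[al_ge0 al_le] [lo_l [lo_u [hi_l hi_u]]]]] :=
  @split_amount N a l u i0 k a_ge0 l_le_u hall_l hall_u k_in B_ne0.
apply: (@split_flow_lift N a l u i0 k k_in al al_le); apply: IH.
- rewrite (bigD1 i0) //= eqxx -ltnS -addSn -card_B.
  rewrite (eq_bigr (fun i => #|N i|)) => [|i /negbTE -> //].
  by rewrite -(bigD1 i0 (P := predT) (F := fun i => #|N i|)).
- by move=> i; case: ifP => _; [lra | apply: a_ge0].
- by move=> j; have := l_le_u j; case: ifP => _; lra.
- exact: split_hall_lower.
- exact: split_hall_upper.
Qed.
End BoundedFlow.

(** * Level points of continuous nondecreasing functions *)

Lemma nondecr0_lt {g : R -> R} {x y} : nondecr0 g -> 0 <= x -> 0 <= y -> g x < g y -> x < y.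
Proof. by move=> g_mono x0 y0 gxy; apply: Rnot_le_lt => yx; have := g_mono y x y0 yx; lra. Qed.

Lemma nondecr0_flat {g : R -> R} {x y z d} : nondecr0 g -> 0 <= x -> x <= z <= y ->
  g x = d -> g y = d -> g z = d.
Proof.
move=> g_mono x0 [xz zy] gx gy.
by have := g_mono x z x0 xz; have := g_mono z y ltac:(lra) zy; lra.
Qed.

Lemma lub_approx {E : R -> Prop} {s w} : is_lub E s -> w < s -> exists e, E e /\ w < e.
Proof.
move=> [_ s_least] ws; apply: NNPP => none.
suff : s <= w by lra.
by apply: s_least => e Ee; apply: Rnot_lt_le => we; apply: none; exists e.
Qed.

Section LevelPoints.
Variable g : R -> R.
Hypotheses (g_mono : nondecr0 g) (g_cont : cont0 g).

Lemma first_level_point {b y} : 0 <= b -> g 0 <= y -> y <= g b ->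
  exists lam, 0 <= lam <= b /\ g lam = y /\ (forall w, 0 <= w -> w < lam -> g w < y).
Proof.
move=> b0 g0y ygb.
case: (Rle_lt_or_eq_dec _ _ g0y) => [g0|g0]; last by exists 0; split; [lra | split => // w; lra].
pose E w := 0 <= w <= b /\ g w < y.
have E_bound : bound E by exists b => w [[]].
have E0 : E 0 by rewrite /E; lra.
have [lam lam_lub] := completeness E E_bound (ex_intro _ 0 E0).
have lam0 : 0 <= lam by case: lam_lub => ub _; apply: ub; rewrite /E; lra.
have lamb : lam <= b by case: lam_lub => _; apply => w [[]].
have below w : 0 <= w -> w < lam -> g w < y.
  move=> w0 wl; have [e [[[e0 eb] ey] we]] := lub_approx lam_lub wl.
  by have := g_mono w e w0 (Rlt_le _ _ we); lra.
exists lam; split; first lra; split => //.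
case: (Rtotal_order (g lam) y) => [glt|[//|ggt]].
  have lamb' : lam < b by case: (Rle_lt_or_eq_dec _ _ lamb) => // lb; rewrite lb in glt; lra.
  have [del [del0 near]] := g_cont lam lam0 (y - g lam) ltac:(lra).
  pose w := Rmin (lam + del / 2) b.
  have w_gt : lam < w by apply: Rmin_glb_lt; lra.
  have w_le : w <= lam + del / 2 by apply: Rmin_l.
  have := near w ltac:(lra) ltac:(rewrite Rabs_right; lra).
  move=> gw; have gwy : g w < y by have := Rle_abs (g w - g lam); lra.
  have : w <= lam by case: lam_lub => ub _; apply: ub; rewrite /E; split; [split; [lra | apply: Rmin_r] | ].
  lra.
have lam_pos : 0 < lam by case: (Rle_lt_or_eq_dec _ _ lam0) => // l0; rewrite -l0 in ggt; lra.
have [del [del0 near]] := g_cont lam lam0 (g lam - y) ltac:(lra).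
pose w := Rmax 0 (lam - del / 2).
have w_lt : w < lam by apply: Rmax_lub_lt; lra.
have w0 : 0 <= w by apply: Rmax_l.
have w_ge : lam - del / 2 <= w by apply: Rmax_r.
have := near w w0 ltac:(rewrite Rabs_left; lra); rewrite Rabs_minus_sym => gw.
by have := below w w0 w_lt; have := Rle_abs (g lam - g w); lra.
Qed.

Lemma last_level_point {y0 d M} : 0 <= y0 -> g y0 = d -> 0 <= M ->
  exists H, y0 <= H /\ g H = d /\ (y0 + M <= H \/ forall z, 0 <= z -> g z <= d -> z <= H).
Proof.
move=> y00 gy0 M0.
case: (classic (exists z0, 0 <= z0 /\ d < g z0)) => [[z0 [z00 dz0]]|unbounded]; last first.
  exists (y0 + M); split; first lra; split; last by left; lra.
  have : d <= g (y0 + M) by rewrite -gy0; apply: g_mono; lra.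
  suff : g (y0 + M) <= d by lra.
  by apply: Rnot_lt_le => lt; apply: unbounded; exists (y0 + M); split; lra.
pose E z := 0 <= z /\ g z <= d.
have E_bound : bound E.
  exists z0 => z [z0' gz]; apply: Rnot_lt_le => lt.
  by have := g_mono z0 z z00 (Rlt_le _ _ lt); lra.
have Ey0 : E y0 by rewrite /E; lra.
have [H H_lub] := completeness E E_bound (ex_intro _ y0 Ey0).
have y0H : y0 <= H by case: H_lub => ub _; apply: ub; rewrite /E; lra.
exists H; split => //; split; last by right => z z0' gz; case: H_lub => ub _; apply: ub.
have dgH : d <= g H by rewrite -gy0; apply: g_mono.
case: (Rle_lt_or_eq_dec _ _ dgH) => // lt.
have [del [del0 near]] := g_cont H ltac:(lra) (g H - d) ltac:(lra).
have [e [[e0 ed] eH']] := lub_approx (w := H - del) H_lub ltac:(lra).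
have eH : e <= H by case: H_lub => ub _; apply: ub.
have := near e e0 ltac:(rewrite Rabs_left1; lra); rewrite Rabs_minus_sym => ge.
by have := Rle_abs (g H - g e); have := g_mono e H e0 eH; lra.
Qed.

End LevelPoints.
Arguments first_level_point {g} _ _ {b y}.
Arguments last_level_point {g} _ _ {y0 d M}.

(** * Equalization *)

Section Equalization.
Context {n : nat} (f : 'I_n -> R -> R).
Hypotheses (f_mono : forall j, nondecr0 (f j)) (f_cont : forall j, cont0 (f j)).
Implicit Types (T : {set 'I_n}) (x y : 'I_n -> R).

Definition at_level T x c := forall k, k \in T -> 0 <= x k /\ f k (x k) = c.

Lemma eqzP T m c :
  eqz f T m c <-> T != set0 /\ exists2 x, at_level T x c & rsum (mem T) x = m.
Proof.
split => [[T0 [x [x0 [xs xc]]]]|[T0 [x xc xs]]]; split => //.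
  by exists x => // k kT; split; [apply: x0 | apply: xc].
by exists x; split; [|split] => // k /xc [].
Qed.

Lemma level_le T x y c d : T != set0 -> at_level T x c -> at_level T y d ->
  rsum (mem T) x <= rsum (mem T) y -> c <= d.
Proof.
case/set0Pn => k0 k0T xc yd sxy; apply: Rnot_lt_le => dc.
have yx k : k \in T -> y k < x k.
  move=> kT; have [x0 fx] := xc k kT; have [y0 fy] := yd k kT.
  by apply: (nondecr0_lt (f_mono k)) => //; lra.
have : rsum (mem T) y < rsum (mem T) x.
  by apply: (rsum_lt k0T) => [k /yx|]; [lra | apply: yx].
lra.
Qed.

Lemma eqz_between T lam H m d : T != set0 -> at_level T lam d -> at_level T H d ->
  (forall k, k \in T -> lam k <= H k) -> rsum (mem T) lam <= m <= rsum (mem T) H ->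
  eqz f T m d.
Proof.
move=> T0 lam_d H_d lamH [lam_m m_H]; apply/eqzP; split => //.
have : rsum (mem T) lam <= rsum (mem T) H by apply: rsum_le.
case/Rle_lt_or_eq_dec => [lt|eq]; last by exists lam => //; lra.
pose th := (m - rsum (mem T) lam) / (rsum (mem T) H - rsum (mem T) lam).
have th0 : 0 <= th by apply: Rmult_le_pos; [lra | apply/Rlt_le/Rinv_0_lt_compat; lra].
have th1 : th <= 1.
  apply: (Rmult_le_reg_r (rsum (mem T) H - rsum (mem T) lam)); first lra.
  by rewrite /th Rmult_assoc Rinv_l; lra.
exists (fun k => lam k + th * (H k - lam k)).
  move=> k kT; have [lam0 flam] := lam_d k kT; have [_ fH] := H_d k kT.
  have gap : 0 <= H k - lam k by have := lamH k kT; lra.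
  have := Rmult_le_pos th (H k - lam k) th0 gap.
  have : th * (H k - lam k) <= H k - lam k.
    by rewrite -{2}(Rmult_1_l (H k - lam k)); apply: Rmult_le_compat_r.
  move=> ? ?; split; first lra.
  by apply: (nondecr0_flat (f_mono k) lam0 _ flam fH); lra.
rewrite rsumD rsumZ rsumB /th; field; lra.
Qed.

Section Equalizer.
Variables (T : {set 'I_n}) (x : 'I_n -> R) (c m : R).
Hypotheses (T_ne0 : T != set0) (x_c : at_level T x c) (x_m : rsum (mem T) x <= m).

Let reachable d :=
  exists z, (forall k, k \in T -> 0 <= z k /\ d <= f k (z k)) /\ rsum (mem T) z <= m.
Let card_T := rsum (mem T) (fun _ => 1).

Let term_le_sum z : (forall k, k \in T -> 0 <= z k) -> forall k, k \in T -> z k <= rsum (mem T) z.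
Proof. by move=> z0 k kT; apply: rsum_term_le. Qed.

Let m_ge0 : 0 <= m.
Proof. by have := rsum_ge0 (mem T) x (fun k kT => proj1 (x_c k kT)); lra. Qed.

Let card_T_ge1 : 1 <= card_T.
Proof. by case/set0Pn: T_ne0 => k0 k0T; apply: (rsum_term_le k0T) => *; lra. Qed.

Let reachable_c : reachable c.
Proof. by exists x; split => // k /x_c [? ->]; split; lra. Qed.

Let reachable_bound : bound reachable.
Proof.
case/set0Pn: T_ne0 => k0 k0T; exists (f k0 m) => d [z [z_d z_m]].
have [z0 dz] := z_d k0 k0T; apply: Rle_trans dz _; apply: f_mono => //.
by have := term_le_sum _ (fun k kT => proj1 (z_d k kT)) k0 k0T; lra.
Qed.

Let c_le_sup ds : is_lub reachable ds -> c <= ds.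
Proof. by case=> ub _; apply: ub. Qed.

Let sup_le_fm ds : is_lub reachable ds -> forall k, k \in T -> ds <= f k m.
Proof.
move=> ds_lub k kT; apply: Rnot_lt_le => lt.
have [d [[z [z_d z_m]] fd]] := lub_approx ds_lub lt.
have [z0 dz] := z_d k kT.
have : m < z k by apply: (nondecr0_lt (f_mono k)) => //; lra.
by have := term_le_sum _ (fun k kT => proj1 (z_d k kT)) k kT; lra.
Qed.

(* If the first points at level ds overshot m by eps * |T|, every point reaching a level
   just below ds would overshoot too, contradicting that such levels are reachable. *)
Let sum_first_points_le ds lam : is_lub reachable ds ->
  (forall k, k \in T -> 0 <= lam k /\ forall w, 0 <= w -> w < lam k -> f k w < ds) ->
  rsum (mem T) lam <= m.
Proof.
move=> ds_lub lam_first; apply: Rnot_lt_le => lt.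
pose eps := (rsum (mem T) lam - m) / card_T.
have eps0 : 0 < eps by apply: Rdiv_lt_0_compat; lra.
have : forall k, exists t, k \in T -> t < ds /\ forall z, 0 <= z -> t < f k z -> lam k - eps < z.
  move=> k; case: (boolP (k \in T)) => kT; last by exists 0.
  have [lam0 below] := lam_first k kT.
  case: (Rlt_le_dec (lam k - eps) 0) => neg.
    by exists (ds - 1) => _; split => [|z z0 _]; lra.
  exists (f k (lam k - eps)) => _; split; first by apply: below; lra.
  move=> z z0 lt'; apply: Rnot_le_lt => le; have := f_mono k z (lam k - eps) z0 le; lra.
case/fin_all_exists => t t_spec.
have [M [M_ds M_max]] := @fin_ub _ (mem T) t ds (fun k kT => proj1 (t_spec k kT)).
have [d [[z [z_d z_m]] Md]] := lub_approx ds_lub M_ds.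
have z_gt k : k \in T -> lam k - eps < z k.
  move=> kT; have [z0 dz] := z_d k kT; apply: (proj2 (t_spec k kT)) => //.
  by have := M_max k kT; lra.
have : rsum (mem T) (fun k => lam k - eps) < rsum (mem T) z.
  by case/set0Pn: T_ne0 => k0 k0T; apply: (rsum_lt k0T) => [k /z_gt|]; [lra | apply: z_gt].
rewrite rsumB -(Rmult_1_r eps) rsumZ -/card_T /eps.
have -> : (rsum (mem T) lam - m) / card_T * card_T = rsum (mem T) lam - m by field; lra.
lra.
Qed.

(* Symmetrically, if the last points at level ds fell short of m, raising all of them by the
   same eps would reach a level strictly above ds. *)
Let sum_last_points_ge ds H : is_lub reachable ds ->
  (forall k, k \in T -> 0 <= H k /\ forall z, 0 <= z -> f k z <= ds -> z <= H k) ->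
  m <= rsum (mem T) H.
Proof.
move=> ds_lub H_last; apply: Rnot_lt_le => lt.
pose eps := (m - rsum (mem T) H) / card_T.
have eps0 : 0 < eps by apply: Rdiv_lt_0_compat; lra.
have above k : k \in T -> ds < f k (H k + eps).
  move=> kT; have [H0 Hmax] := H_last k kT; apply: Rnot_le_lt => le.
  by have := Hmax (H k + eps) ltac:(lra) le; lra.
have [d [ds_d d_min]] := @fin_lb _ (mem T) (fun k => f k (H k + eps)) ds above.
suff : reachable d by case: ds_lub => ub _ /ub; lra.
exists (fun k => H k + eps); split.
  by move=> k kT; split; [have := proj1 (H_last k kT); lra | apply: d_min].
rewrite rsumD -(Rmult_1_r eps) rsumZ -/card_T /eps.
have -> : (m - rsum (mem T) H) / card_T * card_T = m - rsum (mem T) H by field; lra.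
lra.
Qed.

(* The equalizing level is the supremum ds of the reachable levels: the first points at level
   ds have total at most m, the last ones at least m, and the loads interpolate between them. *)
Lemma eqz_exists : exists d, eqz f T m d.
Proof.
have [ds ds_lub] := completeness reachable reachable_bound (ex_intro _ c reachable_c).
have : forall k, exists lam, k \in T ->
    0 <= lam /\ f k lam = ds /\ forall w, 0 <= w -> w < lam -> f k w < ds.
  move=> k; case: (boolP (k \in T)) => kT; last by exists 0.
  have f0 : f k 0 <= ds.
    have [x0 fx] := x_c k kT; apply: (Rle_trans _ c); last exact: c_le_sup.
    by rewrite -fx; apply: f_mono; lra.
  have [lam [[lam0 _] spec]] := first_level_point (f_mono k) (f_cont k) m_ge0 f0 (sup_le_fm ds ds_lub k kT).
  by exists lam.
case/fin_all_exists => lam lam_spec.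
have : forall k, exists H, k \in T ->
    lam k <= H /\ f k H = ds /\ (lam k + m <= H \/ forall z, 0 <= z -> f k z <= ds -> z <= H).
  move=> k; case: (boolP (k \in T)) => kT; last by exists 0.
  have [lam0 [flam _]] := lam_spec k kT.
  have [H spec] := last_level_point (f_mono k) (f_cont k) lam0 flam m_ge0.
  by exists H.
case/fin_all_exists => H H_spec.
have H0 k : k \in T -> 0 <= H k.
  by move=> kT; have [? _] := lam_spec k kT; have [? _] := H_spec k kT; lra.
exists ds; apply: (@eqz_between T lam H m ds T_ne0).
- by move=> k kT; have [? [? _]] := lam_spec k kT.
- by move=> k kT; have [? [? _]] := H_spec k kT; split => //; apply: H0.
- by move=> k kT; case: (H_spec k kT).
split.
  by apply: (sum_first_points_le ds lam ds_lub) => k kT; have [? [_ ?]] := lam_spec k kT.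
case: (classic (exists2 k, k \in T & lam k + m <= H k)) => [[k kT far]|near].
  have := term_le_sum _ H0 k kT; have := proj1 (lam_spec k kT); lra.
apply: (sum_last_points_ge ds H ds_lub) => k kT; split; first exact: H0.
have [_ [_ [far|max]]] := H_spec k kT => //.
by exfalso; apply: near; exists k.
Qed.

End Equalizer.
End Equalization.
Arguments eqzP {n f T m c}.
Arguments level_le {n f} f_mono {T x y c d}.
Arguments eqz_exists {n f} f_mono f_cont {T x c m}.

(** * Masses and the Hall condition at a level *)

Section Masses.
Context {n : nat}.
Implicit Types (mu : {set 'I_n} -> R) (Q T Rs : {set 'I_n}).

Lemma massMeet_id mu Q : massMeet mu Q Q = massIn mu Q.
Proof.
apply: eq_rsum => // Rs; rewrite andbC; case RQ : (Rs \subset Q); rewrite /= ?andbF //.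
by move/setIidPl: RQ => ->.
Qed.

Lemma massIn_set0 mu : massIn mu set0 = 0.
Proof. by apply: rsum_pred0 => Rs; rewrite subset0; case: (Rs == set0). Qed.

Lemma massMeet_set0 mu Q : massMeet mu Q set0 = 0.
Proof. by apply: rsum_pred0 => Rs; rewrite setI0 eqxx andbF. Qed.

Lemma massIn_split mu T T' : massIn mu T = massIn mu (T :\: T') + massMeet mu T T'.
Proof.
rewrite /massIn (rsumID (fun Rs => Rs :&: T' != set0)) Rplus_comm.
congr (_ + _); apply: eq_rsum => // Rs /=.
  by rewrite negbK setI_eq0 subsetD andbA.
case m : (Rs :&: T' != set0); last by rewrite !andbF.
by rewrite (meet_ne0 m).
Qed.

Section NonnegMasses.
Variable mu : {set 'I_n} -> R.
Hypothesis mu_nonneg : forall Rs, Rs != set0 -> 0 <= mu Rs.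

Lemma massIn_ge0 Q : 0 <= massIn mu Q.
Proof. by apply: rsum_ge0 => Rs /andP [/mu_nonneg]. Qed.

Lemma massMeetU Q1 Q2 T :
  massMeet mu Q1 (T :&: Q1) + massMeet mu Q2 (T :\: Q1) <= massMeet mu (Q1 :|: Q2) T.
Proof.
rewrite [X in _ <= X](rsumID (fun Rs => Rs \subset Q1)); apply: Rplus_le_compat.
  apply: Req_le; apply: eq_rsum => // Rs.
  case RQ : (Rs \subset Q1); rewrite /= ?andbF ?andbT //.
  by rewrite (subset_trans RQ (subsetUl _ _)) (setIC T) setIA (setIidPl RQ).
apply: rsum_subpred => [Rs /andP [RQ2 /meetsP [x xR /setDP [xT xQ1]]]|Rs /andP [/andP [_ /meet_ne0 /mu_nonneg //]]].
rewrite (subset_trans RQ2 (subsetUr _ _)) /=; apply/andP; split; first by apply/meetsP; exists x.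
by apply/negP => /subsetP /(_ x xR); apply/negP.
Qed.

Lemma massMeet_removeU P S' T :
  massMeet mu P (T :&: P) + massMeet (removeMass mu P) S' (T :\: P) <= massMeet mu (P :|: S') T.
Proof.
rewrite [X in _ + X]/massMeet /removeMass rsum_partition.
rewrite [X in _ <= X](rsumID (fun Rs => Rs \subset P)); apply: Rplus_le_compat.
  apply: Req_le; apply: eq_rsum => // Rs.
  case RP : (Rs \subset P); rewrite /= ?andbF ?andbT //.
  by rewrite (subset_trans RP (subsetUl _ _)) (setIC T) setIA (setIidPl RP).
apply: rsum_subpred => [Rs /andP [R0 /andP [RS' /meetsP [x /setDP [xR xP] /setDP [xT _]]]]|].
  apply/andP; split; last by apply/negP => /subsetP /(_ x xR); apply/negP.
  apply/andP; split; last by apply/meetsP; exists x.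
  apply/subsetP => y yR; rewrite inE; case yP : (y \in P) => //=.
  by apply: (subsetP RS'); rewrite inE yP.
by move=> Rs /andP [/andP [_ /meet_ne0 /mu_nonneg]].
Qed.

Lemma massIn_subset Q Q' : Q \subset Q' -> massIn mu Q <= massIn mu Q'.
Proof.
move=> QQ'; apply: rsum_subpred => [Rs /andP [-> RQ]|Rs /andP [/mu_nonneg //]].
exact: subset_trans RQ QQ'.
Qed.

End NonnegMasses.
End Masses.

Section HallLevel.
Context {n : nat} (f : 'I_n -> R -> R).
Hypotheses (f_mono : forall j, nondecr0 (f j)) (f_cont : forall j, cont0 (f j)).
Implicit Types (mu : {set 'I_n} -> R) (P Q T U : {set 'I_n}).

(* For E_G(Q) = c this says M_G(Q) is empty
   (hall_level_inD, inD_hall_level), and unlike M_G it is stable under unions. *)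
Definition hall_level mu Q c := forall T, T \subset Q ->
  exists2 x, at_level f T x c & rsum (mem T) x <= massMeet mu Q T.

Lemma hall_levelP mu Q c :
  (forall T, T != set0 -> T \subset Q -> exists2 x, at_level f T x c & rsum (mem T) x <= massMeet mu Q T) ->
  hall_level mu Q c.
Proof.
move=> hall T TQ; case: (eqVneq T set0) => [->|T0]; last exact: hall.
by exists (fun _ => 0) => [k|]; rewrite ?in_set0 // rsum_set0 massMeet_set0; lra.
Qed.

Lemma hall_level_set0 mu c : hall_level mu set0 c.
Proof. by apply: hall_levelP => T T0; rewrite subset0 (negbTE T0). Qed.

Lemma hall_level_inD {mu U Q c} : inD f mu U Q c -> hall_level mu Q c.
Proof.
move=> [Q0 [QU [_ notM]]]; apply: hall_levelP => T T0 TQ.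
case: (classic (exists m, [/\ 0 <= m, m <= massMeet mu Q T & eqz f T m c])) => [|none].
  by case=> m [m0 m_le /eqzP [_ [x xc xm]]]; exists x; rewrite ?xm.
by case: (notM T); split => //; split => // m m0 m_le E; apply: none; exists m.
Qed.

Lemma inD_hall_level {mu Q c} : Q != set0 -> Eval f mu Q c -> hall_level mu Q c ->
  inD f mu setT Q c.
Proof.
move=> Q0 EQ hall; split => //; split; first exact: subsetT.
split => // T [T0 [TQ starved]]; have [x xc x_le] := hall T TQ.
apply: (starved (rsum (mem T) x)) => //; first by apply: rsum_ge0 => k /xc [].
by apply/eqzP; split => //; exists x.
Qed.

Lemma hall_level_lower {mu Q c c'} : (forall k, f k 0 <= c) -> c <= c' ->
  hall_level mu Q c' -> hall_level mu Q c.
Proof.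
move=> f0 cc' hall T TQ; have [x xc' x_le] := hall T TQ.
have : forall k, exists y, k \in T -> 0 <= y <= x k /\ f k y = c.
  move=> k; case: (boolP (k \in T)) => kT; last by exists 0.
  have [x0 fx] := xc' k kT.
  have [y [y_range [fy _]]] := first_level_point (f_mono k) (f_cont k) x0 (f0 k) ltac:(rewrite fx; lra).
  by exists y.
case/fin_all_exists => y y_spec.
exists y => [k kT|]; first by have [[? _] ?] := y_spec k kT.
by apply: Rle_trans x_le; apply: rsum_le => k kT; have [[_ ?] _] := y_spec k kT.
Qed.

Lemma hall_level_glue {mu mu1 mu2 Q1 Q2 c} : hall_level mu1 Q1 c -> hall_level mu2 Q2 c ->
  (forall T, massMeet mu1 Q1 (T :&: Q1) + massMeet mu2 Q2 (T :\: Q1) <= massMeet mu (Q1 :|: Q2) T) ->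
  hall_level mu (Q1 :|: Q2) c.
Proof.
move=> hall1 hall2 mass T TQ.
have [x1 x1c x1_le] := hall1 (T :&: Q1) (subsetIr _ _).
have TQ2 : T :\: Q1 \subset Q2.
  by apply/subsetP => k /setDP [kT kQ1]; move: (subsetP TQ k kT); rewrite inE (negbTE kQ1).
have [x2 x2c x2_le] := hall2 _ TQ2.
exists (fun k => if k \in Q1 then x1 k else x2 k).
  by move=> k kT; case: ifP => kQ1; [apply: x1c | apply: x2c]; rewrite inE kT kQ1.
rewrite (rsum_setID T Q1).
have -> : rsum (mem (T :&: Q1)) (fun k => if k \in Q1 then x1 k else x2 k) = rsum (mem (T :&: Q1)) x1.
  by apply: eq_rsum => // k /setIP [_ ->].
have -> : rsum (mem (T :\: Q1)) (fun k => if k \in Q1 then x1 k else x2 k) = rsum (mem (T :\: Q1)) x2.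
  by apply: eq_rsum => // k /setDP [_ /negbTE ->].
by have := mass T; lra.
Qed.

Section Game.
Variable mu : {set 'I_n} -> R.
Hypothesis mu_nonneg : forall Rs, Rs != set0 -> 0 <= mu Rs.

Lemma hall_levelU Q1 Q2 c : hall_level mu Q1 c -> hall_level mu Q2 c -> hall_level mu (Q1 :|: Q2) c.
Proof. by move=> hall1 hall2; apply: hall_level_glue hall1 hall2 _ => T; apply: massMeetU. Qed.

Lemma hall_level_cover P c : (forall j, j \in P <-> exists Q, inD f mu setT Q c /\ j \in Q) ->
  hall_level mu P c.
Proof.
move=> P_cover.
have : forall j, exists Q, j \in P -> inD f mu setT Q c /\ j \in Q.
  move=> j; case: (boolP (j \in P)) => jP; last by exists set0.
  by have [Q ?] := (P_cover j).1 jP; exists Q.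
case/fin_all_exists => Qof Qof_spec.
have -> : P = \bigcup_(j in P) Qof j.
  apply/setP => j; apply/idP/bigcupP => [jP|[i iP jQ]]; first by exists j; last case: (Qof_spec j jP).
  by apply/(P_cover j).2; exists (Qof i); split => //; case: (Qof_spec i iP).
apply: (big_ind (fun X => hall_level mu X c)); first exact: hall_level_set0.
  by move=> X Y; apply: hall_levelU.
by move=> j jP; apply: (@hall_level_inD mu setT); case: (Qof_spec j jP).
Qed.

Lemma eqz_of_hall_level {Q c} : Q != set0 -> hall_level mu Q c -> exists2 d, Eval f mu Q d & c <= d.
Proof.
move=> Q0 hall; have [x xc] := hall Q (subxx Q); rewrite massMeet_id => x_le.
have [d Ed] := eqz_exists f_mono f_cont Q0 xc x_le; exists d => //.
by case/eqzP: Ed => _ [y yd ys]; apply: (level_le f_mono Q0 xc yd); lra.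
Qed.

Lemma single_inD k : inD f mu setT [set k] (f k (massIn mu [set k])).
Proof.
have k_ne0 : [set k] != set0 by apply/set0Pn; exists k; rewrite inE.
have at_k : at_level f [set k] (fun _ => massIn mu [set k]) (f k (massIn mu [set k])).
  by move=> j; rewrite inE => /eqP ->; split => //; apply: massIn_ge0.
apply: inD_hall_level => //; first by apply/eqzP; split => //; exists (fun _ => massIn mu [set k]); rewrite ?rsum_set1.
apply: hall_levelP => T T0; rewrite subset1 (negbTE T0) orbF => /eqP ->.
by exists (fun _ => massIn mu [set k]); rewrite // rsum_set1 massMeet_id; lra.
Qed.

Section MaxLevel.
Variable h : R.
Hypothesis hH : isH f mu setT h.

Lemma f0_le_h k : f k 0 <= h.
Proof.
apply: Rle_trans (proj2 hH _ _ (single_inD k)).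
by apply: f_mono; [lra | apply: massIn_ge0].
Qed.

(* If T is not in D, some S' in M(T) is starved; the rest T \ S' then holds more than its
   share of mass and equalizes at a higher level, and we recurse on it. *)
Lemma Eval_le_h {T c} : Eval f mu T c -> c <= h.
Proof.
move: {2}#|T| (leqnn #|T|) => m; elim: m T c => [|m IH] T c Tm ET; have [T0 _] := ET.
  by move: Tm; rewrite leqn0 cards_eq0 (negbTE T0).
case: (classic (forall S', ~ inM f mu T S' c)) => [notM|].
  by apply: (proj2 hH T); split => //; split => //; apply: subsetT.
move/not_all_ex_not => [S' /NNPP [S'0 [S'T starved]]].
have [_ [x xc x_sum]] := eqzP.1 ET.
have S'_over : massMeet mu T S' < rsum (mem S') x.
  apply: Rnot_le_lt => le; apply: (starved (rsum (mem S') x)) => //.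
    by apply: rsum_ge0 => k kS; case: (xc k (subsetP S'T k kS)).
  by apply/eqzP; split => //; exists x => // k kS; apply: xc; apply: (subsetP S'T).
have rest_under : rsum (mem (T :\: S')) x < massIn mu (T :\: S').
  move: x_sum; rewrite (rsum_setID T S') (setIidPr S'T) (massIn_split mu T S'); lra.
have rest0 : T :\: S' != set0.
  by apply/eqP => rest0; move: rest_under; rewrite rest0 rsum_set0 massIn_set0; lra.
have xc_rest : at_level f (T :\: S') x c by move=> k /setDP [kT _]; apply: xc.
have [d Ed] := eqz_exists f_mono f_cont rest0 xc_rest (Rlt_le _ _ rest_under).
have cd : c <= d.
  by case/eqzP: Ed => _ [y yd ys]; apply: (level_le f_mono rest0 xc_rest yd); lra.
apply: Rle_trans cd (IH _ _ _ Ed); rewrite -ltnS; apply: leq_trans Tm.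
apply: proper_card; apply/properP; split; first exact: subsetDl.
by have [k kS] := set0Pn _ S'0; exists k; [apply: (subsetP S'T) | rewrite inE kS].
Qed.

Lemma inD_of_hall_level Q : Q != set0 -> hall_level mu Q h -> inD f mu setT Q h.
Proof.
move=> Q0 hall; have [d EQ hd] := eqz_of_hall_level Q0 hall.
have dh := Eval_le_h EQ; have dh' : d = h by lra.
by rewrite dh' in EQ; apply: inD_hall_level.
Qed.

Variable P : {set 'I_n}.
Hypothesis hP : isP f mu setT h P.

Let hall_P : hall_level mu P h.
Proof. exact: hall_level_cover. Qed.

Section Bounds.
Variables lo hi : 'I_n -> R.
Hypothesis lo_hi : forall k, 0 <= lo k <= hi k.
Hypothesis hi_out : forall k, k \notin P -> hi k = 0.
Hypothesis lo_first : forall k, k \in P -> forall w, 0 <= w -> w < lo k -> f k w < h.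
Hypothesis lo_level : forall k, k \in P -> f k (lo k) = h.
Hypothesis hi_level : forall k, k \in P -> f k (hi k) = h.
Hypothesis hi_last : forall k, k \in P ->
  lo k + massIn mu P <= hi k \/ forall z, 0 <= z -> f k z <= h -> z <= hi k.

Let amount Rs := if (Rs != set0) && (Rs \subset P) then mu Rs else 0.

Let sum_over_P v (T : {set 'I_n}) : (forall k, k \notin P -> v k = 0) -> sum_over v T = sum_over v (T :&: P).
Proof.
by move=> v0; rewrite /sum_over (rsum_setID T P) [X in _ + X]rsum_eq0 ?Rplus_0_r // => k /setDP [_ /v0].
Qed.

Let lo_out k : k \notin P -> lo k = 0.
Proof. by move=> kP; have := lo_hi k; rewrite hi_out //; lra. Qed.

Let bounds_hall_lower (T : {set 'I_n}) : sum_over lo T <= mass_meeting (fun Rs : {set 'I_n} => Rs) amount T.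
Proof.
rewrite (sum_over_P lo T lo_out); have [y yh y_le] := hall_P (T :&: P) (subsetIr T P).
have -> : mass_meeting (fun Rs : {set 'I_n} => Rs) amount T = massMeet mu P (T :&: P).
  rewrite /mass_meeting /massMeet [LHS]rsum_mkcond [RHS]rsum_mkcond /amount; apply: eq_rsum => // Rs _.
  case RP : (Rs \subset P); rewrite /= ?andbF ?andbT; last by case: ifP.
  by rewrite (setIC T) setIA (setIidPl RP); case m : (Rs :&: T != set0); rewrite ?(meet_ne0 m).
apply: Rle_trans y_le; apply: rsum_le => k /setIP [kT kP].
have [y0 fy] := yh k ltac:(by rewrite inE kT kP).
by apply: Rnot_lt_le => lt; have := lo_first k kP (y k) y0 lt; lra.
Qed.

(* If the mass inside T exceeded the sum of the hi's, it would equalize at a level d with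
   h <= d (since sum lo <= sum hi); but d <= h_G, so the equalizing loads sit at level h
   and are bounded by the maximal points hi. *)
Let massIn_le_hi (T : {set 'I_n}) : T \subset P -> massIn mu T <= sum_over hi T.
Proof.
move=> TP; case: (eqVneq T set0) => [->|T0]; first by rewrite massIn_set0 /sum_over rsum_set0; lra.
have hi_ge0 k : 0 <= hi k by have := lo_hi k; lra.
case: (classic (exists2 k, k \in T & lo k + massIn mu P <= hi k)) => [[k kT far]|near].
  have : hi k <= sum_over hi T by apply: (rsum_term_le kT) => j _; apply: hi_ge0.
  by have := massIn_subset mu mu_nonneg T P TP; have := lo_hi k; lra.
have hi_max k : k \in T -> forall z, 0 <= z -> f k z <= h -> z <= hi k.
  move=> kT; have [far|//] := hi_last k (subsetP TP k kT).
  by case: near; exists k.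
have lo_h : at_level f T lo h by move=> k kT; split; [case: (lo_hi k) | apply: lo_level; apply: (subsetP TP)].
have lo_hi_sum : sum_over lo T <= sum_over hi T by apply: rsum_le => k _; case: (lo_hi k).
apply: Rnot_lt_le => lt.
have [d Ed] := eqz_exists f_mono f_cont T0 lo_h (Rlt_le _ _ (Rle_lt_trans _ _ _ lo_hi_sum lt)).
have dh := Eval_le_h Ed.
case/eqzP: Ed => _ [y yd y_sum].
have hd : h <= d.
  by apply: (level_le f_mono T0 lo_h yd); rewrite y_sum; exact: Rlt_le (Rle_lt_trans _ _ _ lo_hi_sum lt).
have : rsum (mem T) y <= sum_over hi T.
  by apply: rsum_le => k kT; have [y0 fy] := yd k kT; apply: hi_max; rewrite // fy; lra.
lra.
Qed.

Let bounds_hall_upper (T : {set 'I_n}) : mass_inside (fun Rs : {set 'I_n} => Rs) amount T <= sum_over hi T.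
Proof.
rewrite (sum_over_P hi T hi_out); apply: Rle_trans _ (massIn_le_hi (T :&: P) (subsetIr T P)); apply: Req_le.
rewrite /mass_inside /massIn [LHS]rsum_mkcond [RHS]rsum_mkcond /amount; apply: eq_rsum => // Rs _.
by rewrite subsetI; case: (Rs \subset T); case: (Rs != set0); case: (Rs \subset P).
Qed.

Lemma profile_of_bounds :
  exists s, consProfile mu P s /\ forall j, j \in P -> f j (load P s j) = h.
Proof.
have amount_ge0 Rs : 0 <= amount Rs by rewrite /amount; case: ifP => [/andP [/mu_nonneg]|_]; lra.
have [x [x_ge0 [x_supp [x_sum x_load]]]] := bounded_flow_exists (fun Rs : {set 'I_n} => Rs) amount lo hi
  amount_ge0 (fun k => proj2 (lo_hi k)) bounds_hall_lower bounds_hall_upper.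
have x_out Rs j : ~~ ((Rs != set0) && (Rs \subset P)) -> x Rs j = 0.
  move=> RP; have := x_sum Rs; rewrite /amount (negbTE RP) => xs.
  by have := @rsum_term_le _ j predT (x Rs) isT (fun i _ => x_ge0 Rs i); have := x_ge0 Rs j; lra.
have loadE j : load P x j = rsum predT (fun Rs => x Rs j).
  rewrite /load [RHS](rsumID (fun Rs => (Rs != set0) && (Rs \subset P))) [X in _ + X]rsum_eq0.
    by rewrite Rplus_0_r.
  by move=> Rs /andP [_ /x_out ->].
exists x; split => [Rs R0 RP|j jP].
  split; first exact: x_ge0; split; first exact: x_supp.
  have := x_sum Rs; rewrite /amount R0 RP /= => <-.
  rewrite [RHS](rsumID (mem Rs)) [X in _ + X]rsum_eq0 ?Rplus_0_r; last by move=> j /andP [_ /x_supp].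
  exact: eq_rsum.
rewrite loadE; have := x_load j; case=> lo_l l_hi.
by apply: (nondecr0_flat (f_mono j) (proj1 (lo_hi j)) _ (lo_level j jP) (hi_level j jP)); split.
Qed.

End Bounds.

Lemma equilibrium_on_P :
  exists s, consProfile mu P s /\ forall j, j \in P -> f j (load P s j) = h.
Proof.
have : forall k, exists b : R * R, (k \in P -> [/\ 0 <= b.1 <= b.2, f k b.1 = h, f k b.2 = h,
      forall w, 0 <= w -> w < b.1 -> f k w < h &
      b.1 + massIn mu P <= b.2 \/ forall z, 0 <= z -> f k z <= h -> z <= b.2]) /\
    (k \notin P -> b = (0, 0)).
  move=> k; case: (boolP (k \in P)) => kP; last by exists (0, 0).
  have [x xh _] := hall_P [set k] ltac:(by rewrite sub1set).
  have [x0 fx] := xh k (set11 k).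
  have [lo [[lo0 _] [flo below]]] :=
    first_level_point (f_mono k) (f_cont k) x0 (f0_le_h k) ltac:(rewrite fx; lra).
  have [hi [lohi [fhi far]]] :=
    last_level_point (f_mono k) (f_cont k) lo0 flo (massIn_ge0 mu mu_nonneg P).
  by exists (lo, hi); split => // _; split => //; lra.
case/fin_all_exists => b b_spec.
apply: (@profile_of_bounds (fun k => (b k).1) (fun k => (b k).2)) => k.
- case: (boolP (k \in P)) => kP; first by case: ((b_spec k).1 kP).
  by rewrite ((b_spec k).2 kP) /=; lra.
- by move=> kP; rewrite ((b_spec k).2 kP).
- by move=> kP; case: ((b_spec k).1 kP).
- by move=> kP; case: ((b_spec k).1 kP).
- by move=> kP; case: ((b_spec k).1 kP).
- by move=> kP; case: ((b_spec k).1 kP).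
Qed.

Lemma removal_lt h' : isH f (removeMass mu P) (~: P) h' -> h' < h.
Proof.
move=> [[S' S'D] _]; apply: Rnot_le_lt => hh'.
have [S'0 [S'P _]] := S'D.
have hall_S' : hall_level (removeMass mu P) S' h.
  by apply: (hall_level_lower _ hh' (hall_level_inD S'D)); apply: f0_le_h.
have hall_PS' : hall_level mu (P :|: S') h.
  by apply: (hall_level_glue hall_P hall_S') => T; apply: massMeet_removeU.
have [j jS'] := set0Pn _ S'0.
have PS'0 : P :|: S' != set0 by apply/set0Pn; exists j; rewrite inE jS' orbT.
have jP : j \in P.
  by apply/(hP j).2; exists (P :|: S'); split; [apply: inD_of_hall_level | rewrite inE jS' orbT].
by move: (subsetP S'P j jS'); rewrite inE jP.
Qed.

End MaxLevel.
End Game.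
End HallLevel.

Arguments equilibrium_on_P {n f} f_mono f_cont {mu} mu_nonneg {h} hH {P} hP.
Arguments removal_lt {n f} f_mono f_cont {mu} mu_nonneg {h} hH {P} hP {h'}.

Theorem mainTheorem15 (n : nat) (f : 'I_n -> R -> R) (mu : {set 'I_n} -> R)
  (f_mono : forall j, nondecr0 (f j))
  (f_cont : forall j, cont0 (f j))
  (mu_nonneg : forall Rs : {set 'I_n}, Rs != set0 -> 0 <= mu Rs)
  (h : R) (P : {set 'I_n})
  (hH : isH f mu setT h) (hP : isP f mu setT h P) :
  (exists s : {set 'I_n} -> 'I_n -> R,
     consProfile mu P s /\ forall j, j \in P -> f j (load P s j) = h) /\
  (P != setT -> forall h', isH f (removeMass mu P) (~: P) h' -> h > h').
Proof.
split; first exact (equilibrium_on_P f_mono f_cont mu_nonneg hH hP).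
by move=> _ h' hH'; exact (removal_lt f_mono f_cont mu_nonneg hH hP hH').
Qed.
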